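(* Let $A\in\mathbb{R}^{n\times n}$ and $b\in\mathbb{R}^n$, and consider the generalized Newton method (GNM) for the absolute value equation $Ax-|x|-b=0$: starting from an arbitrary $x^0\in\mathbb{R}^n$, compute $x^{k+1}=[A-\mathcal{D}(x^k)]^{-1}b$ for $k=0,1,2,\dots$. Suppose that $A$ satisfies either (a) $A-I$ is an $M$-matrix, or (b) $\mathcal{N}(A^\top-I)=\mathrm{span}(v)$ for some vector $v>0$, and $A-I+D$ is an $M$-matrix for every diagonal matrix $D=\mathrm{diag}(d)$ with $d\ge 0$ and $d\neq 0$. If $A$ satisfies (b), assume in addition that $\mathcal{D}(x^0)\neq I$ and $v^\top b<0$. Then $A-\mathcal{D}(x^k)$ is an $M$-matrix for every $k=0,1,2,\dots$, and hence the GNM iteration is well defined.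
   Context: For $x\in\mathbb{R}^n$, $|x|=(|x_1|,\dots,|x_n|)^\top$, and $\mathcal{D}(x)=\mathrm{diag}(\mathrm{sign}(x))$, where $\mathrm{sign}(x)$ is the vector whose $i$th component is $-1$, $0$, or $1$ according as $x_i<0$, $x_i=0$, or $x_i>0$. A matrix is a $Z$-matrix if all its off-diagonal entries are $\le 0$; a $Z$-matrix $A$ is an $M$-matrix if $A$ is nonsingular and $A^{-1}\ge 0$ (entrywise). Vector and matrix inequalities are entrywise; $v>0$ means all entries of $v$ are strictly positive. $\mathcal{N}(X)$ denotes the null space of $X$. *)

From HB Require Import structures.
From mathcomp Require Import all_boot all_order all_algebra.
Set Implicit Arguments. Unset Strict Implicit. Unset Printing Implicit Defensive.
Import Order.TTheory GRing.Theory Num.Theory.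
Local Open Scope ring_scope.

Definition Dsgn (R : realFieldType) (n : nat) (x : 'cV[R]_n) : 'M[R]_n :=
  diag_mx (\row_i Num.sg (x i 0)).

Definition Zmatrix (R : realFieldType) (n : nat) (A : 'M[R]_n) : Prop :=
  forall i j : 'I_n, i != j -> A i j <= 0.

Definition Mmatrix (R : realFieldType) (n : nat) (A : 'M[R]_n) : Prop :=
  [/\ Zmatrix A, A \in unitmx & forall i j : 'I_n, 0 <= (invmx A) i j].

Definition nullsp (R : realFieldType) (n : nat) (X : 'M[R]_n) (u : 'cV[R]_n) : Prop :=
  X *m u = 0.

Definition span1 (R : realFieldType) (n : nat) (v : 'cV[R]_n) (u : 'cV[R]_n) : Prop :=
  exists c : R, u = c *: v.

Fixpoint gnm (R : realFieldType) (n : nat) (A : 'M[R]_n) (b x0 : 'cV[R]_n) (k : nat)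
  : 'cV[R]_n :=
  match k with
  | 0 => x0
  | k'.+1 => invmx (A - Dsgn (gnm A b x0 k')) *m b
  end.

(* [A - D(x)] is [A - I] plus the nonnegative diagonal [diag(1 - sign x)].  A
   Z-matrix admitting a positive [x] with [M x > 0] is an M-matrix, and such a
   certificate survives adding a nonnegative diagonal; this settles (a).  In
   case (b) the added diagonal is nonzero as soon as [D(x) <> I], and
   [D(x^(k+1)) = I] is impossible: then [x^(k+1) > 0], and since [v^T A = v^T],
   [v^T b = v^T (A - D(x^k)) x^(k+1) = v^T diag(1 - sign x^k) x^(k+1) >= 0]. *)
From mathcomp Require Import all_boot all_order all_algebra.
From mathcomp Require Import ring lra.
Import Order.TTheory GRing.Theory Num.Theory.
Local Open Scope ring_scope.

Section Mmatrices.

Variables (R : realFieldType) (n : nat).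
Implicit Types (M : 'M[R]_n) (x y : 'cV[R]_n).

Definition pos_vec x := forall i, 0 < x i 0.
Definition nneg_vec x := forall i, 0 <= x i 0.

Lemma Zmatrix_monotone M x y :
  Zmatrix M -> pos_vec x -> pos_vec (M *m x) -> nneg_vec (M *m y) -> nneg_vec y.
Proof.
move=> MZ x_gt0 Mx_gt0 My_ge0 i0; rewrite leNgt; apply/negP => yi0_lt0.
pose ratio j := y j 0 / x j 0.
have [i _ ratio_min] := @arg_minP _ R _ i0 predT ratio isT.
set t := ratio i in ratio_min.
have t_lt0 : t < 0.
  apply: le_lt_trans (ratio_min i0 isT) _.
  by rewrite /ratio -(ltr_pM2r (x_gt0 i0)) divfK ?mul0r ?lt0r_neq0.
have My_le : (M *m y) i 0 <= t * (M *m x) i 0.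
  rewrite !mxE mulr_sumr; apply: ler_sum => j _.
  have [<-|ij] := eqVneq i j; first by rewrite /t /ratio mulrCA divfK ?lt0r_neq0.
  have Mij_le0 := MZ _ _ ij.
  have txj_le : t * x j 0 <= y j 0 by rewrite -ler_pdivlMr ?ratio_min.
  have -> : t * (M i j * x j 0) = M i j * (t * x j 0) by ring.
  nra.
by have := My_ge0 i; have := Mx_gt0 i; nra.
Qed.

Lemma Zmatrix_semipos_Mmatrix M x :
  Zmatrix M -> pos_vec x -> pos_vec (M *m x) -> Mmatrix M.
Proof.
move=> MZ x_gt0 Mx_gt0; have mono y := @Zmatrix_monotone M x y MZ x_gt0 Mx_gt0.
have M_unit : M \in unitmx.
  rewrite -unitmx_tr -row_free_unit; apply: inj_row_free => u uM0.
  have Mu0 : M *m u^T = 0 by rewrite -[M]trmxK -trmx_mul uM0 trmx0.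
  apply/matrixP => a j; rewrite (ord1 a) [RHS]mxE.
  have ge0 : 0 <= u^T j 0 by apply: mono => i; rewrite Mu0 mxE.
  have le0 : 0 <= (- u^T) j 0 by apply: mono => i; rewrite mulmxN Mu0 oppr0 mxE.
  by move: ge0 le0; rewrite !mxE; lra.
split=> // i j.
have Mcol : M *m col j (invmx M) = delta_mx j 0.
  by rewrite colE mulmxA mulmxV // mul1mx.
have col_ge0 : nneg_vec (col j (invmx M)) by apply: mono => k; rewrite Mcol mxE ler0n.
by have := col_ge0 i; rewrite mxE.
Qed.

Lemma Mmatrix_semipos M : Mmatrix M -> exists2 x, pos_vec x & pos_vec (M *m x).
Proof.
case=> _ M_unit inv_ge0.
exists (invmx M *m const_mx 1) => i; last first.
  by rewrite mulmxA mulmxV // mul1mx mxE ltr01.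
have row_ge0 j : true -> 0 <= invmx M i j * (const_mx 1 : 'cV[R]_n) j 0.
  by rewrite mxE mulr1.
rewrite mxE lt_def sumr_ge0 // andbT; apply/eqP => /(psumr_eq0P row_ge0) row0.
suff : (invmx M *m M) i i = 0 by rewrite mulVmx // mxE eqxx => /eqP; rewrite oner_eq0.
rewrite mxE big1 // => j _.
by have := row0 j isT; rewrite mxE mulr1 => ->; rewrite mul0r.
Qed.

Lemma Mmatrix_add_diag M (d : 'rV[R]_n) :
  Mmatrix M -> (forall i, 0 <= d 0 i) -> Mmatrix (M + diag_mx d).
Proof.
move=> MM d_ge0; have [x x_gt0 Mx_gt0] := Mmatrix_semipos _ MM.
have [MZ _ _] := MM.
apply: (@Zmatrix_semipos_Mmatrix _ x) => // [i j ij|i].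
  by rewrite !mxE (negbTE ij) mulr0n addr0 MZ.
have -> : ((M + diag_mx d) *m x) i 0 = (M *m x) i 0 + d 0 i * x i 0.
  by rewrite mulmxDl mul_diag_mx !mxE.
by have := Mx_gt0 i; have := d_ge0 i; have := x_gt0 i; nra.
Qed.

Definition sg_slack x : 'rV[R]_n := \row_i (1 - Num.sg (x i 0)).

Lemma sg_slack_ge0 x i : 0 <= sg_slack x 0 i.
Proof. by rewrite mxE; case: sgrP => _; lra. Qed.

Lemma diag_sg_slack x : diag_mx (sg_slack x) = 1%:M - Dsgn x.
Proof. by apply/matrixP => i j; rewrite !mxE mulrnBl. Qed.

Lemma sub_Dsgn M x : M - Dsgn x = M - 1%:M + diag_mx (sg_slack x).
Proof. by rewrite diag_sg_slack addrA subrK. Qed.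

Lemma sg_slack_eq0 x : sg_slack x = 0 -> Dsgn x = 1%:M.
Proof.
move=> slack0; apply/esym/subr0_eq.
by rewrite -diag_sg_slack slack0; apply/matrixP => i j; rewrite !mxE mul0rn.
Qed.

Lemma Dsgn_eq1_pos x : Dsgn x = 1%:M -> pos_vec x.
Proof.
by move=> /matrixP/(_ _ _)/eqP D1 i; have := D1 i i; rewrite !mxE eqxx !mulr1n sgr_cp0.
Qed.

Lemma left_fixed_sub_Dsgn M v x y : v^T *m M = v^T ->
  nneg_vec v -> nneg_vec y -> 0 <= (v^T *m (M - Dsgn x) *m y) 0 0.
Proof.
move=> vM v_ge0 y_ge0.
rewrite sub_Dsgn mulmxDr mulmxBr vM mulmx1 subrr add0r -mulmxA mxE.
apply: sumr_ge0 => j _; apply: mulr_ge0; first by rewrite mxE.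
by rewrite mul_diag_mx mxE mulr_ge0 ?sg_slack_ge0.
Qed.

End Mmatrices.

Lemma nullsp_trmx_left_fixed (R : realFieldType) n (A : 'M[R]_n) (v : 'cV[R]_n) :
  nullsp (A^T - 1%:M) v -> v^T *m A = v^T.
Proof.
rewrite /nullsp mulmxBl mul1mx => /subr0_eq ATv.
by rewrite -[A]trmxK -trmx_mul ATv.
Qed.

Theorem lemma3p1 (R : realFieldType) (n : nat) (A : 'M[R]_n) (b x0 : 'cV[R]_n) :
  (Mmatrix (A - 1%:M)
   \/ exists v : 'cV[R]_n,
        [/\ (forall u : 'cV[R]_n, nullsp (A^T - 1%:M) u <-> span1 v u),
            (forall i : 'I_n, 0 < v i 0),
            (forall d : 'rV[R]_n, (forall i : 'I_n, 0 <= d 0 i) -> d != 0 ->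
               Mmatrix (A - 1%:M + diag_mx d)),
            Dsgn x0 != 1%:M
          & (v^T *m b) 0 0 < 0]) ->
  forall k : nat, Mmatrix (A - Dsgn (gnm A b x0 k)).
Proof.
case=> [AI_M|[v [null_v v_gt0 AI_diag_M D0_neq1 vb_lt0]]] k.
  by rewrite sub_Dsgn; apply: Mmatrix_add_diag => //; apply: sg_slack_ge0.
have M_if_Dsgn_neq1 x : Dsgn x != 1%:M -> Mmatrix (A - Dsgn x).
  move=> D_neq1; rewrite sub_Dsgn; apply: AI_diag_M; first exact: sg_slack_ge0.
  by apply: contra D_neq1 => /eqP/sg_slack_eq0/eqP.
have vA : v^T *m A = v^T.
  by apply: nullsp_trmx_left_fixed; apply/null_v; exists 1; rewrite scale1r.
elim: k => [|k IH] //=; first exact: M_if_Dsgn_neq1.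
apply: M_if_Dsgn_neq1; apply/eqP => /Dsgn_eq1_pos x_gt0.
have [_ unit_k _] := IH.
move: vb_lt0; rewrite ltNge => /negP; apply.
have <- : (A - Dsgn (gnm A b x0 k)) *m gnm A b x0 k.+1 = b.
  by rewrite mulmxA mulmxV // mul1mx.
rewrite mulmxA; apply: left_fixed_sub_Dsgn => // i; exact: ltW.
Qed.
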